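(* Let $n\ge 2$ and $1\le i,j\le n$, and let $E_{ij}\in\{0,1\}^{n\times n}$ be the basis matrix with $(E_{ij})_{kl}=\delta_{ik}\delta_{jl}$. If $E_{ij}$ is decomposable, then $E_{ij}$ is maximal, i.e. for every compatible pair $(n_1,n_2)$ there exist $X\in\{0,1\}^{n_1\times n_1}$, $Y\in\{0,1\}^{n_2\times n_2}$ with $E_{ij}=X\otimes Y$.
   Context: Kronecker products of binary matrices use Boolean arithmetic ($1+1=1$). A matrix $A\in\{0,1\}^{n\times n}$ is decomposable if there exist $\ell>1$ and $A_i\in\{0,1\}^{n_i\times n_i}$ with $n_i>1$ such that $A=A_1\otimes\cdots\otimes A_\ell$. A compatible pair for $n$ is a pair $(n_1,n_2)$ of positive divisors of $n$, both different from $1$ and $n$, with $n_1n_2=n$. A decomposable matrix is maximal if it admits an $(n_1,n_2)$ factorization $A=A_1\otimes A_2$ ($A_i\in\{0,1\}^{n_i\times n_i}$) for every compatible pair $(n_1,n_2)$. *)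

From mathcomp Require Import all_boot all_algebra.
Set Implicit Arguments. Unset Strict Implicit. Unset Printing Implicit Defensive.

(* Binary (0/1) matrices are represented as 'M[bool]_k; true = 1, false = 0.
   Boolean arithmetic: products are &&, so the Kronecker product is entrywise &&. *)

Definition bentry (k : nat) (A : 'M[bool]_k) (r c : nat) : bool :=
  match insub r, insub c with
  | Some i, Some j => A i j
  | _, _ => false
  end.

Definition bsq := {k : nat & 'M[bool]_k}.
Definition bdim (A : bsq) : nat := projT1 A.
Definition bent (A : bsq) : nat -> nat -> bool := bentry (projT2 A).

(* Kronecker product (Boolean) of two square binary matrices:
   (X ⊗ Y)_{(a*n2+b),(c*n2+d)} = X_{a c} && Y_{b d}, 0-based indices. *)
Definition kron (n1 n2 : nat) (X : 'M[bool]_n1) (Y : 'M[bool]_n2)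
  : 'M[bool]_(n1 * n2) :=
  \matrix_(i, j) (bentry X (i %/ n2) (j %/ n2) && bentry Y (i %% n2) (j %% n2)).

Definition bkron (A B : bsq) : bsq := existT _ _ (kron (projT2 A) (projT2 B)).

Fixpoint bkron_seq (A : bsq) (s : seq bsq) : bsq :=
  match s with
  | [::] => A
  | B :: s' => bkron A (bkron_seq B s')
  end.

Definition beq (n : nat) (A : 'M[bool]_n) (B : bsq) : Prop :=
  bdim B = n /\ forall r c, r < n -> c < n -> bentry A r c = bent B r c.

(* A is decomposable: A = A_1 ⊗ ... ⊗ A_l with l > 1 and every n_i > 1. *)
Definition decomposable (n : nat) (A : 'M[bool]_n) : Prop :=
  exists (A1 : bsq) (s : seq bsq),
    0 < size s /\ all (fun B => 1 < bdim B) (A1 :: s) /\ beq A (bkron_seq A1 s).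

Definition compatible_pair (n n1 n2 : nat) : Prop :=
  [&& n1 %| n, n2 %| n, n1 != 1, n1 != n, n2 != 1, n2 != n & n1 * n2 == n].

Definition maximal (n : nat) (A : 'M[bool]_n) : Prop :=
  decomposable A /\
  forall n1 n2, compatible_pair n n1 n2 ->
    exists (X : 'M[bool]_n1) (Y : 'M[bool]_n2), beq A (bkron (existT _ _ X) (existT _ _ Y)).

Definition basis_mx (n : nat) (i j : 'I_n) : 'M[bool]_n :=
  \matrix_(k, l) ((k == i) && (l == j)).

From mathcomp Require Import all_boot all_algebra.

(* A basis matrix factors along any splitting n = n1 * n2: the single 1 at
   (r, c) is the Kronecker product of the single 1 at (r / n2, c / n2) in
   the first factor and the single 1 at (r mod n2, c mod n2) in the second,
   because a natural number is determined by its quotient and remainder. *)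

Definition point_mx k (r0 c0 : nat) : 'M[bool]_k :=
  \matrix_(a, b) ((a == r0 :> nat) && (b == c0 :> nat)).

Lemma basis_mxE n (i j : 'I_n) : basis_mx i j = point_mx n i j.
Proof. by apply/matrixP => a b; rewrite !mxE. Qed.

Lemma bentry_point k r0 c0 r c :
  bentry (point_mx k r0 c0) r c = [&& r < k, c < k, r == r0 & c == c0].
Proof.
rewrite /bentry; case: (insubP (ordinal k) r) => [a _ <-|/negbTE -> //].
case: (insubP (ordinal k) c) => [b _ <-|/negbTE ->]; first by rewrite mxE !ltn_ord.
by rewrite /= andbF.
Qed.

Lemma eqn_divmod d r s : (r == s) = (r %/ d == s %/ d) && (r %% d == s %% d).
Proof.
apply/eqP/andP => [-> //|[/eqP eq_div /eqP eq_mod]].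
by rewrite (divn_eq r d) (divn_eq s d) eq_div eq_mod.
Qed.

Lemma kron_point n1 n2 r c : 0 < n2 ->
  kron (point_mx n1 (r %/ n2) (c %/ n2)) (point_mx n2 (r %% n2) (c %% n2))
  = point_mx (n1 * n2) r c.
Proof.
move=> n2_gt0; apply/matrixP => a b; rewrite !mxE !bentry_point.
rewrite !ltn_divLR // !ltn_pmod // !ltn_ord /=.
by rewrite (eqn_divmod n2 a) (eqn_divmod n2 b); do 4!case: eqP.
Qed.

Lemma point_mx_factor n n1 n2 r c : n1 * n2 = n -> 0 < n2 ->
  beq (point_mx n r c)
      (bkron (existT _ _ (point_mx n1 (r %/ n2) (c %/ n2)))
             (existT _ _ (point_mx n2 (r %% n2) (c %% n2)))).
Proof.
move=> dim_n n2_gt0; split=> // a b _ _.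
by rewrite /bent /= kron_point // !bentry_point dim_n.
Qed.

Theorem lemma3 (n : nat) (i j : 'I_n) :
  2 <= n ->
  decomposable (basis_mx i j) ->
  maximal (basis_mx i j).
Proof.
move=> n_ge2 dec; split=> // n1 n2 /and5P[_ _ _ _ /and3P[_ _ /eqP dim_n]].
have n2_gt0 : 0 < n2.
  by rewrite lt0n; apply: contraTneq n_ge2 => n2_0; rewrite -dim_n n2_0 muln0.
rewrite basis_mxE; do 2!eexists; exact: point_mx_factor.
Qed.
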